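(* Let $X$ be a real $n\times p$ matrix ($p<n$) of full column rank with rows $x_1^\top,\dots,x_n^\top$, let $N=\{1,\dots,n\}$, let $M\subset N$, and let $y,b^*\in\mathbb{R}^n$ and $g^*,g\in\mathbb{R}^p$ be arbitrary. Then: (i) if $|M|=k<m(X)$, then $$\|y-Xg-b^*\|_1-\|y-Xg^*-b^*\|_1\geq (2c_k-1)\|X(g-g^* )\|_1-2\sum_{i\in N\setminus M}|y_i-x_i^\top g^*-b^*_i|;$$ (ii) if $|M|=0$, then for every $b\in\mathbb{R}^n$, $$\|y-Xg-b\|_1-\|y-Xg^*-b^*\|_1\geq \|X(g-g^* )+b-b^*\|_1-2\sum_{i\in N}|y_i-b^*_i-x_i^\top g^*|.$$
   Context: For $k\in\{1,\dots,n\}$, the leverage constants of $X$ are $$c_k=c_k(X)=\min_{M\subset N,\ |M|=k}\ \min_{g\in\mathbb{R}^p,\ g\neq 0}\ \frac{\sum_{i\in N\setminus M}|x_i^\top g|}{\sum_{i\in N}|x_i^\top g|},$$ and $m(X)=\max\{k\in N : c_k(X)>1/2\}$. *)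

From HB Require Import structures.
From mathcomp Require Import all_boot all_order all_algebra.
From mathcomp Require Import boolp classical_sets reals.
Set Implicit Arguments. Unset Strict Implicit. Unset Printing Implicit Defensive.
Import Order.TTheory GRing.Theory Num.Theory.
Local Open Scope classical_set_scope.
Local Open Scope ring_scope.

Definition norm1 (R : realType) (n : nat) (v : 'cV[R]_n) : R :=
  \sum_(i < n) `|v i 0|.

Definition rowdot (R : realType) (n p : nat) (X : 'M[R]_(n, p)) (i : 'I_n)
  (g : 'cV[R]_p) : R := (X *m g) i 0.

(* leverage constant c_k(X): the minimum (taken as infimum; it is attained)
   over |M| = k and g <> 0 of sum_{i notin M} |x_i^T g| / sum_i |x_i^T g| *)
Definition leverage_const (R : realType) (n p : nat) (X : 'M[R]_(n, p))
  (k : nat) : R :=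
  inf [set r : R | exists (M : {set 'I_n}) (g : 'cV[R]_p),
         [/\ #|M| = k, g != 0 &
             r = (\sum_(i in ~: M) `|rowdot X i g|) /
                 (\sum_(i < n) `|rowdot X i g|)]].

(* m(X) = max { k in {1..n} : c_k(X) > 1/2 } (0 if the set is empty) *)
Definition mX (R : realType) (n p : nat) (X : 'M[R]_(n, p)) : nat :=
  \max_(k < n.+1 | (1 <= k)%N && (2^-1 < leverage_const X k)) k.

From HB Require Import structures.
From mathcomp Require Import all_boot all_order all_algebra.
From mathcomp Require Import boolp classical_sets reals.
From mathcomp Require Import ring lra.
Import Order.TTheory GRing.Theory Num.Theory.
Local Open Scope ring_scope.

(* With r the residual y - X g* - b* and u the perturbation, each coordinate
   satisfies |r_i - u_i| - |r_i| >= |u_i| - 2|r_i| and >= -|u_i| (triangle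
   inequality); use the first bound on N \ M (resp. N) and the second on M.
   By the definition of c_k, the u-terms over N \ M carry at least a c_k
   fraction of ||X(g - g* )||_1, which gives (i); (ii) is the case M = {}. *)

Lemma norm1_subr_ge {R : realType} {n : nat} (A : {set 'I_n})
    (r u : 'cV[R]_n) :
  2 * \sum_(i in A) `|u i 0| - norm1 u - 2 * \sum_(i in A) `|r i 0|
    <= norm1 (r - u) - norm1 r.
Proof.
rewrite /norm1 (bigID (mem A) predT (fun i => `|u i 0|)) /=.
rewrite (bigID (mem A) predT (fun i => `|(r - u) i 0|)) /=.
rewrite (bigID (mem A) predT (fun i => `|r i 0|)) /=.
have inA : \sum_(i in A) (`|u i 0| - `|r i 0|) <= \sum_(i in A) `|(r - u) i 0|.
  by apply: ler_sum => i _; rewrite !mxE distrC lerB_dist.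
have offA : \sum_(i | i \notin A) (`|r i 0| - `|u i 0|)
            <= \sum_(i | i \notin A) `|(r - u) i 0|.
  by apply: ler_sum => i _; rewrite !mxE lerB_dist.
move: inA offA; rewrite !sumrB; lra.
Qed.

Lemma norm1_subr_ge_full {R : realType} {n : nat} (r u : 'cV[R]_n) :
  norm1 u - 2 * norm1 r <= norm1 (r - u) - norm1 r.
Proof.
have sum_setT (v : 'cV[R]_n) : \sum_(i in [set: 'I_n]) `|v i 0| = norm1 v.
  by apply: eq_bigl => i; rewrite finset.in_setT.
by have := norm1_subr_ge [set: 'I_n] r u; rewrite !sum_setT; lra.
Qed.

Lemma leverage_const_norm1_le {R : realType} {n p : nat} (X : 'M[R]_(n, p))
    (M : {set 'I_n}) (h : 'cV[R]_p) :
  leverage_const X #|M| * norm1 (X *m h) <= \sum_(i in ~: M) `|rowdot X i h|.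
Proof.
have [S0|Sn0] := eqVneq (norm1 (X *m h)) 0.
  by rewrite S0 mulr0; apply: sumr_ge0.
have hn0 : h != 0.
  apply: contraNneq Sn0 => ->.
  by rewrite mulmx0 /norm1 big1 // => i _; rewrite mxE normr0.
rewrite -ler_pdivlMr; last by rewrite lt_def Sn0 sumr_ge0.
apply: ge_inf; last by exists M, h.
by exists 0 => _ [M' [h' [_ _ ->]]]; rewrite divr_ge0 ?sumr_ge0.
Qed.

Theorem lemma3p3 (R : realType) (n p : nat) (X : 'M[R]_(n, p))
  (hpn : (p < n)%N) (hrank : \rank X = p)
  (M : {set 'I_n}) (y bstar : 'cV[R]_n) (gstar g : 'cV[R]_p) :
  ((#|M| < mX X)%N ->
     norm1 (y - X *m g - bstar) - norm1 (y - X *m gstar - bstar) >=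
     (2 * leverage_const X #|M| - 1) * norm1 (X *m (g - gstar))
     - 2 * \sum_(i in ~: M) `|y i 0 - rowdot X i gstar - bstar i 0|) /\
  (#|M| = 0%N -> forall b : 'cV[R]_n,
     norm1 (y - X *m g - b) - norm1 (y - X *m gstar - bstar) >=
     norm1 (X *m (g - gstar) + b - bstar)
     - 2 * \sum_(i < n) `|y i 0 - bstar i 0 - rowdot X i gstar|).
Proof.
set r := y - X *m gstar - bstar.
have r_entry i : r i 0 = y i 0 - rowdot X i gstar - bstar i 0.
  by rewrite /r /rowdot !mxE.
(* The size condition |M| < m(X) only makes 2 c_k - 1 positive; the
   inequalities hold for every M. *)
split=> [_ | _ b].
- have -> : y - X *m g - bstar = r - X *m (g - gstar).
    by rewrite mulmxBr /r; apply/matrixP => i j; rewrite !mxE; ring.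
  under eq_bigr do rewrite -r_entry.
  apply: le_trans (norm1_subr_ge (~: M) r (X *m (g - gstar))).
  by rewrite mulrBl mul1r -mulrA lerD2r lerD2r ler_wpM2l // leverage_const_norm1_le.
- have -> : y - X *m g - b = r - (X *m (g - gstar) + b - bstar).
    by rewrite mulmxBr /r; apply/matrixP => i j; rewrite !mxE; ring.
  have r_entry' i : y i 0 - bstar i 0 - rowdot X i gstar = r i 0.
    by rewrite r_entry; ring.
  under eq_bigr do rewrite r_entry'.
  exact: norm1_subr_ge_full.
Qed.
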